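(* Up to isomorphism, there are exactly 25 Frobenius objects in $\mathbf{Rel}$ whose underlying set has three elements. Writing the set as $X=\{a,b,c\}$, they are the following (pairwise non-isomorphic) structures; in all of them $\tilde\mu$ is symmetric, $\tilde\mu(x,y)=\tilde\mu(y,x)$. Cases 1–20 have unit $\eta=\{a\}$, so $\tilde\mu(a,x)=\tilde\mu(x,a)=\{x\}$ for all $x$, and the remaining values $(\tilde\mu(b,b),\ \tilde\mu(b,c)=\tilde\mu(c,b),\ \tilde\mu(c,c))$ and counit are: 1: $\varepsilon=\{a\}$; $(\{a\},\{c\},\{a,b\})$. 2: $\varepsilon=\{a\}$; $(\{a\},\{c\},\{a,b,c\})$. 3: $\varepsilon=\{a\}$; $(\{a,b\},\{c\},\{a,b\})$. 4: $\varepsilon=\{a\}$; $(\{a,b\},\{c\},\{a,b,c\})$. 5: $\varepsilon=\{a\}$; $(\{a,c\},\{b,c\},\{a,b\})$. 6: $\varepsilon=\{a\}$; $(\{a,c\},\{b,c\},\{a,b,c\})$. 7: $\varepsilon=\{a\}$; $(\{a,b,c\},\{b,c\},\{a,b,c\})$. 8: $\varepsilon=\{a\}$; $(\{b\},\{a,b,c\},\{b,c\})$. 9: $\varepsilon=\{a\}$; $(\{b\},\{a,b,c\},\{c\})$. 10: $\varepsilon=\{a\}$; $(\{c\},\{a\},\{b\})$. 11: $\varepsilon=\{a\}$; $(\{c\},\{a,b\},\{b,c\})$. 12: $\varepsilon=\{a\}$; $(\{b,c\},\{a,b,c\},\{b,c\})$. 13: $\varepsilon=\{b\}$; $(\emptyset,\emptyset,\{b\})$.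 14: $\varepsilon=\{b\}$; $(\emptyset,\emptyset,\{b,c\})$. 15: $\varepsilon=\{b\}$; $(\{a\},\{c\},\{a,b\})$. 16: $\varepsilon=\{b\}$; $(\{a\},\{c\},\{a,b,c\})$. 17: $\varepsilon=\{b\}$; $(\{c\},\{a\},\{b\})$. 18: $\varepsilon=\{b\}$; $(\{c\},\{a,c\},\{a,b,c\})$. 19: $\varepsilon=\{b\}$; $(\{a,c\},\{a,c\},\{a,b\})$. 20: $\varepsilon=\{b\}$; $(\{a,c\},\{a,c\},\{a,b,c\})$. Cases 21–24 have unit $\eta=\{a,b\}$ and $\tilde\mu(a,a)=\{a\}$, $\tilde\mu(a,b)=\tilde\mu(b,a)=\tilde\mu(a,c)=\tilde\mu(c,a)=\emptyset$, $\tilde\mu(b,b)=\{b\}$, $\tilde\mu(b,c)=\tilde\mu(c,b)=\{c\}$, with: 21: $\varepsilon=\{a,b\}$, $\tilde\mu(c,c)=\{b\}$. 22: $\varepsilon=\{a,b\}$, $\tilde\mu(c,c)=\{b,c\}$. 23: $\varepsilon=\{a,c\}$, $\tilde\mu(c,c)=\{b\}$. 24: $\varepsilon=\{a,c\}$, $\tilde\mu(c,c)=\emptyset$. Case 25: $\eta=\varepsilon=\{a,b,c\}$, $\tilde\mu(x,x)=\{x\}$ for each $x$, and $\tilde\mu(x,y)=\emptyset$ for $x\ne y$.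
   Context: $\mathbf{Rel}$ is the monoidal category whose objects are sets, morphisms $X\to Y$ are relations $R\subseteq X\times Y$, composition is $S\circ R=\{(x,z):\exists y,(x,y)\in R,(y,z)\in S\}$, identities are diagonals, the monoidal product is the Cartesian product and the unit is $\{\bullet\}$. A relation $R\subseteq X\times Y$ is identified with $\tilde R:X\to\mathcal{P}(Y)$, $\tilde R(x)=\{y:(x,y)\in R\}$. A Frobenius object in $\mathbf{Rel}$ is a set $X$ with unit $\eta\subseteq X$ (relation $\{\bullet\}\to X$), counit $\varepsilon\subseteq X$ (relation $X\to\{\bullet\}$) and multiplication $\mu\subseteq X\times X\times X$ (relation $X\times X\to X$, described by $\tilde\mu:X\times X\to\mathcal{P}(X)$) satisfying unitality $\mu\circ(\mathbf{1}\times\eta)=\mu\circ(\eta\times\mathbf{1})=\mathbf{1}$, associativity $\mu\circ(\mathbf{1}\times\mu)=\mu\circ(\mu\times\mathbf{1})$, and nondegeneracy: there exists a relation $\beta:\{\bullet\}\to X\times X$ with $(\varepsilon\times\mathbf{1})\circ(\mu\times\mathbf{1})\circ(\mathbf{1}\times\beta)=(\mathbf{1}\times\varepsilon)\circ(\mathbf{1}\times\mu)\circ(\beta\times\mathbf{1})=\mathbf{1}$. An isomorphism between Frobenius objects $(X,\eta,\varepsilon,\tilde\mu)$ and $(X',\eta',\varepsilon',\tilde\mu')$ is a bijection $f:X\to X'$ with $f(\eta)=\eta'$, $f(\varepsilon)=\varepsilon'$ and $\tilde\mu'(f(x),f(y))=f(\tilde\mu(x,y))$ for all $x,y$. *)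

From mathcomp Require Import all_boot.
Set Implicit Arguments. Unset Strict Implicit. Unset Printing Implicit Defensive.

Definition hrel (X Y : Type) := X -> Y -> Prop.

Definition rcomp X Y Z (S : hrel Y Z) (R : hrel X Y) : hrel X Z :=
  fun x z => exists y, R x y /\ S y z.
Definition rid (X : Type) : hrel X X := fun x y => x = y.
Arguments rid : clear implicits.
Definition rtens X X' Y Y' (R : hrel X Y) (S : hrel X' Y') : hrel (X * X') (Y * Y') :=
  fun p q => R p.1 q.1 /\ S p.2 q.2.
Definition rassoc X Y Z : hrel ((X * Y) * Z) (X * (Y * Z)) :=
  fun p q => q = (p.1.1, (p.1.2, p.2)).
Definition rassoc_inv X Y Z : hrel (X * (Y * Z)) ((X * Y) * Z) :=
  fun p q => q = ((p.1, p.2.1), p.2.2).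
Definition rlunit X : hrel (unit * X) X := fun p x => x = p.2.
Definition rlunit_inv X : hrel X (unit * X) := fun x p => p = (tt, x).
Definition rrunit X : hrel (X * unit) X := fun p x => x = p.1.
Definition rrunit_inv X : hrel X (X * unit) := fun x p => p = (x, tt).
Definition req X Y (R S : hrel X Y) : Prop := forall x y, R x y <-> S x y.

Record frob (T : finType) := Frob {
  f_eta : {set T};              (* unit  eta : {•} -> T *)
  f_eps : {set T};              (* counit eps : T -> {•} *)
  f_mu  : T -> T -> {set T}     (* mu~ : T x T -> P(T) *)
}.

Section FrobRel.
Variables (T : finType) (F : frob T).
Definition eta_rel : hrel unit T := fun _ x => x \in f_eta F.
Definition eps_rel : hrel T unit := fun x _ => x \in f_eps F.
Definition mu_rel : hrel (T * T) T := fun p z => z \in f_mu F p.1 p.2.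

Definition unital : Prop :=
  req (rcomp mu_rel (rcomp (rtens (rid T) eta_rel) (@rrunit_inv T))) (rid T) /\
  req (rcomp mu_rel (rcomp (rtens eta_rel (rid T)) (@rlunit_inv T))) (rid T).

Definition associative : Prop :=
  req (rcomp mu_rel (rcomp (rtens (rid T) mu_rel) (@rassoc T T T)))
      (rcomp mu_rel (rtens mu_rel (rid T))).

Definition nondegenerate : Prop :=
  exists beta : hrel unit (T * T),
    req (rcomp (@rlunit T)
          (rcomp (rtens eps_rel (rid T))
          (rcomp (rtens mu_rel (rid T))
          (rcomp (@rassoc_inv T T T)
          (rcomp (rtens (rid T) beta) (@rrunit_inv T)))))) (rid T) /\
    req (rcomp (@rrunit T)
          (rcomp (rtens (rid T) eps_rel)
          (rcomp (rtens (rid T) mu_rel)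
          (rcomp (@rassoc T T T)
          (rcomp (rtens beta (rid T)) (@rlunit_inv T)))))) (rid T).

Definition is_frobenius : Prop := [/\ unital, associative & nondegenerate].
End FrobRel.

Definition frob_iso (T T' : finType) (F : frob T) (F' : frob T') : Prop :=
  exists f : T -> T', [/\ bijective f,
    f @: f_eta F = f_eta F', f @: f_eps F = f_eps F' &
    forall x y, f_mu F' (f x) (f y) = f @: f_mu F x y].

Definition ea : 'I_3 := @Ordinal 3 0 isT.
Definition eb : 'I_3 := @Ordinal 3 1 isT.
Definition ec : 'I_3 := @Ordinal 3 2 isT.

Definition mu_u (bb bc cc : {set 'I_3}) (x y : 'I_3) : {set 'I_3} :=
  if x == ea then [set y] else if y == ea then [set x]
  else if (x == eb) && (y == eb) then bb
  else if (x == ec) && (y == ec) then cc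
  else bc.
Definition case_u (e bb bc cc : {set 'I_3}) : frob 'I_3 :=
  Frob [set ea] e (mu_u bb bc cc).

Definition mu_v (cc : {set 'I_3}) (x y : 'I_3) : {set 'I_3} :=
  if (x == ea) && (y == ea) then [set ea]
  else if (x == ea) || (y == ea) then set0
  else if (x == eb) && (y == eb) then [set eb]
  else if (x == ec) && (y == ec) then cc
  else [set ec].
Definition case_v (e cc : {set 'I_3}) : frob 'I_3 :=
  Frob [set ea; eb] e (mu_v cc).

Definition case_w : frob 'I_3 :=
  Frob setT setT (fun x y => if x == y then [set x] else set0).

Definition fcase (n : nat) : frob 'I_3 :=
  match n with
  | 1 => case_u [set ea] [set ea] [set ec] [set ea; eb]
  | 2 => case_u [set ea] [set ea] [set ec] [set ea; eb; ec]
  | 3 => case_u [set ea] [set ea; eb] [set ec] [set ea; eb]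
  | 4 => case_u [set ea] [set ea; eb] [set ec] [set ea; eb; ec]
  | 5 => case_u [set ea] [set ea; ec] [set eb; ec] [set ea; eb]
  | 6 => case_u [set ea] [set ea; ec] [set eb; ec] [set ea; eb; ec]
  | 7 => case_u [set ea] [set ea; eb; ec] [set eb; ec] [set ea; eb; ec]
  | 8 => case_u [set ea] [set eb] [set ea; eb; ec] [set eb; ec]
  | 9 => case_u [set ea] [set eb] [set ea; eb; ec] [set ec]
  | 10 => case_u [set ea] [set ec] [set ea] [set eb]
  | 11 => case_u [set ea] [set ec] [set ea; eb] [set eb; ec]
  | 12 => case_u [set ea] [set eb; ec] [set ea; eb; ec] [set eb; ec]
  | 13 => case_u [set eb] set0 set0 [set eb]
  | 14 => case_u [set eb] set0 set0 [set eb; ec]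
  | 15 => case_u [set eb] [set ea] [set ec] [set ea; eb]
  | 16 => case_u [set eb] [set ea] [set ec] [set ea; eb; ec]
  | 17 => case_u [set eb] [set ec] [set ea] [set eb]
  | 18 => case_u [set eb] [set ec] [set ea; ec] [set ea; eb; ec]
  | 19 => case_u [set eb] [set ea; ec] [set ea; ec] [set ea; eb]
  | 20 => case_u [set eb] [set ea; ec] [set ea; ec] [set ea; eb; ec]
  | 21 => case_v [set ea; eb] [set eb]
  | 22 => case_v [set ea; eb] [set eb; ec]
  | 23 => case_v [set ea; ec] [set eb]
  | 24 => case_v [set ea; ec] set0
  | _ => case_w
  end.

(* In Rel, a Frobenius structure (eta, eps, mu) can be read pointwise: unitality and
   associativity are first-order statements about the ternary relation mu, and
   nondegeneracy says that the pairing sigma(x, y) := "mu(x, y) meets eps" is invertible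
   in Rel.  The invertible relations are exactly the graphs of bijections, so no copairing
   has to be guessed, and on a finite set all three conditions become decidable.  The
   classification is then a finite search.  For each unit eta <> {}, unitality only
   involves the cells mu(x, e) and mu(e, x) with e in eta, and forces them inside {x};
   these cells are filled first and unitality is checked, then the remaining cells and
   the counit are enumerated, and every Frobenius structure found is shown isomorphic,
   through one of the six permutations, to one of the 25 listed ones.  The same decision
   procedures show that the listed structures are Frobenius and pairwise non-isomorphic. *)

From Pilot Require Import Defs.
From HB Require Import structures.
From mathcomp Require Import all_boot.
From Stdlib Require Import Setoid FunctionalExtensionality.
Set Implicit Arguments. Unset Strict Implicit. Unset Printing Implicit Defensive.

Record fdata (T : Type) := FData {
  d_eta : pred T;
  d_eps : pred T;
  d_mu : T -> T -> pred T
}.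

Lemma fdataE (T : Type) (D : fdata T) : FData (d_eta D) (d_eps D) (d_mu D) = D.
Proof. by case: D. Qed.

Definition fdata_of (T : finType) (F : frob T) : fdata T :=
  FData (fun z => z \in f_eta F) (fun z => z \in f_eps F) (fun x y z => z \in f_mu F x y).

Definition bijective_rel (X Y : Type) (R : hrel X Y) :=
  (forall x, exists! y, R x y) /\ (forall y, exists! x, R x y).

Lemma rel_iso_bijective (X Y : Type) (R : hrel X Y) :
  (exists S : hrel Y X, req (rcomp S R) (rid X) /\ req (rcomp R S) (rid Y)) <->
  bijective_rel R.
Proof.
split=> [[S [SR RS]] | [Rl Rr]].
- split=> [x | y].
  + have [y [Rxy Syx]] := (SR x x).2 erefl.
    by exists y; split=> // y' Rxy'; apply/(RS y y').1; exists x.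
  + have [x [Syx Rxy]] := (RS y y).2 erefl.
    by exists x; split=> // x' Rx'y; apply/esym/(SR x' x).1; exists y.
- exists (fun y x => R x y); split=> [x x' | y y']; split.
  + case=> y [Rxy Rx'y]; have [x0 [_ u]] := Rr y; by rewrite -(u _ Rxy) -(u _ Rx'y).
  + move=> <-; have [y [Rxy _]] := Rl x; by exists y.
  + case=> x [Rxy Rxy']; have [y0 [_ u]] := Rl x; by rewrite -(u _ Rxy) -(u _ Rxy').
  + move=> <-; have [x [Rxy _]] := Rr y; by exists x.
Qed.

Section Laws.
Variables (T : Type) (D : fdata T).
Local Notation eta := (d_eta D).
Local Notation eps := (d_eps D).
Local Notation mu := (d_mu D).

Definition unit_law := forall x z,
  ((exists2 e, eta e & mu x e z) <-> x = z) /\ ((exists2 e, eta e & mu e x z) <-> x = z).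

Definition assoc_law := forall x y z w,
  (exists2 m, mu y z m & mu x m w) <-> (exists2 m, mu x y m & mu m z w).

Definition pairing : hrel T T := fun x y => exists2 m, mu x y m & eps m.

Definition frobenius_laws := [/\ unit_law, assoc_law & bijective_rel pairing].

End Laws.

Section Bridge.
Variables (T : finType) (F : frob T).
Local Notation D := (fdata_of F).

Lemma right_unit_relE x z :
  rcomp (mu_rel F) (rcomp (rtens (rid T) (eta_rel F)) (@rrunit_inv T)) x z <->
  exists2 e, e \in f_eta F & z \in f_mu F x e.
Proof.
split=> [[[x' e] [[q [-> [/= <- eta_e]]] mu_z]] | [e eta_e mu_z]]; first by exists e.
by exists (x, e); split=> //; exists (x, tt).
Qed.

Lemma left_unit_relE x z :
  rcomp (mu_rel F) (rcomp (rtens (eta_rel F) (rid T)) (@rlunit_inv T)) x z <->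
  exists2 e, e \in f_eta F & z \in f_mu F e x.
Proof.
split=> [[[e x'] [[q [-> [eta_e /= <-]]] mu_z]] | [e eta_e mu_z]]; first by exists e.
by exists (e, x); split=> //; exists (tt, x).
Qed.

Lemma unitalP : unital F <-> unit_law D.
Proof.
split=> [[rU lU] x z | uD].
  by split; [rewrite -right_unit_relE; apply: rU | rewrite -left_unit_relE; apply: lU].
split=> x z; first by rewrite right_unit_relE; apply: (uD x z).1.
by rewrite left_unit_relE; apply: (uD x z).2.
Qed.

Lemma assoc_left_relE p w :
  rcomp (mu_rel F) (rcomp (rtens (rid T) (mu_rel F)) (@rassoc T T T)) p w <->
  exists2 m, m \in f_mu F p.1.2 p.2 & w \in f_mu F p.1.1 m.
Proof.
split=> [[[x' m] [[q [-> [/= <- mu_m]]] mu_w]] | [m mu_m mu_w]]; first by exists m.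
by exists (p.1.1, m); split=> //; exists (p.1.1, (p.1.2, p.2)).
Qed.

Lemma assoc_right_relE p w :
  rcomp (mu_rel F) (rtens (mu_rel F) (rid T)) p w <->
  exists2 m, m \in f_mu F p.1.1 p.1.2 & w \in f_mu F m p.2.
Proof.
split=> [[[m z'] [[/= mu_m <-] mu_w]] | [m mu_m mu_w]]; first by exists m.
by exists (m, p.2).
Qed.

Lemma associativeP : Defs.associative F <-> assoc_law D.
Proof.
split=> [aF x y z w | aD [[x y] z] w].
  by have := aF ((x, y), z) w; rewrite assoc_left_relE assoc_right_relE.
by rewrite assoc_left_relE assoc_right_relE; apply: aD.
Qed.

Ltac destruct_rel :=
  unfold rcomp, rtens, rid, rlunit, rrunit, rlunit_inv, rrunit_inv, rassoc, rassoc_inv,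
    eps_rel, mu_rel in *;
  repeat match goal with
  | H : exists _, _ |- _ => destruct H
  | H : _ /\ _ |- _ => destruct H
  | p : prod _ _ |- _ => destruct p
  | u : unit |- _ => destruct u
  | H : (_, _) = (_, _) |- _ => case: H => *
  end; simpl in *; subst.

Lemma nondeg_left_relE (beta : hrel unit (T * T)) x y :
  rcomp (@rlunit T) (rcomp (rtens (eps_rel F) (rid T)) (rcomp (rtens (mu_rel F) (rid T))
    (rcomp (@rassoc_inv T T T) (rcomp (rtens (rid T) beta) (@rrunit_inv T))))) x y <->
  rcomp (fun b y => beta tt (b, y)) (pairing D) x y.
Proof.
split=> [H | [b [[m mu_m eps_m] beta_b]]].
  by destruct_rel; eexists; split; [rewrite /pairing /=; eexists|]; eassumption.
exists (tt, y); split=> //; exists (m, y); split=> //; exists ((x, b), y); split=> //.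
by exists (x, (b, y)); split=> //; exists (x, tt).
Qed.

Lemma nondeg_right_relE (beta : hrel unit (T * T)) x y :
  rcomp (@rrunit T) (rcomp (rtens (rid T) (eps_rel F)) (rcomp (rtens (rid T) (mu_rel F))
    (rcomp (@rassoc T T T) (rcomp (rtens beta (rid T)) (@rlunit_inv T))))) x y <->
  rcomp (pairing D) (fun y b => beta tt (y, b)) y x.
Proof.
split=> [H | [b [beta_b [m mu_m eps_m]]]].
  by destruct_rel; eexists; split; [|rewrite /pairing /=; eexists]; eassumption.
exists (y, tt); split=> //; exists (y, m); split=> //; exists (y, (b, x)); split=> //.
by exists ((y, b), x); split=> //; exists (tt, x).
Qed.

Lemma nondegenerateP : nondegenerate F <-> bijective_rel (pairing D).
Proof.
rewrite -rel_iso_bijective.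
split=> [[beta [l r]] | [S [SR RS]]].
  exists (fun b y => beta tt (b, y)); split=> x y.
    by rewrite -nondeg_left_relE; apply: l.
  by rewrite -nondeg_right_relE r; split=> ->.
exists (fun _ p => S p.1 p.2); split=> x y.
  by rewrite nondeg_left_relE; apply: SR.
by rewrite nondeg_right_relE RS; split=> ->.
Qed.

Lemma frobeniusP : is_frobenius F <-> frobenius_laws D.
Proof.
split=> [[/unitalP uF /associativeP aF /nondegenerateP nF] | [uD aD nD]].
  by split.
by split; [apply/unitalP | apply/associativeP | apply/nondegenerateP].
Qed.
End Bridge.

Section Pull.
Variables (A B : Type) (h : A -> B) (D : fdata B).
Hypothesis h_bij : bijective h.

Definition fdata_pull : fdata A :=
  FData (fun x => d_eta D (h x)) (fun x => d_eps D (h x)) (fun x y z => d_mu D (h x) (h y) (h z)).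

Lemma unit_law_pull : unit_law D -> unit_law fdata_pull.
Proof.
have [g hK gK] := h_bij; move=> uD x z; have [[l1 l2] [r1 r2]] := uD (h x) (h z).
split; split=> [[e eta_e mu_z] | /(congr1 h) hxz].
- by apply: (bij_inj h_bij); apply: l1; exists (h e).
- by have [e ? ?] := l2 hxz; exists (g e); rewrite /= gK.
- by apply: (bij_inj h_bij); apply: r1; exists (h e).
- by have [e ? ?] := r2 hxz; exists (g e); rewrite /= gK.
Qed.

Lemma assoc_law_pull : assoc_law D -> assoc_law fdata_pull.
Proof.
have [g hK gK] := h_bij; move=> aD x y z w.
have [l r] := aD (h x) (h y) (h z) (h w).
split=> [[m mu1 mu2] | [m mu1 mu2]].
  by have [m' ? ?] := l (ex_intro2 _ _ (h m) mu1 mu2); exists (g m'); rewrite /= gK.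
by have [m' ? ?] := r (ex_intro2 _ _ (h m) mu1 mu2); exists (g m'); rewrite /= gK.
Qed.

Lemma pairing_pull x y : pairing fdata_pull x y <-> pairing D (h x) (h y).
Proof.
have [g hK gK] := h_bij; split=> [[m] | [m mu_m eps_m]]; first by exists (h m).
by exists (g m); rewrite /= gK.
Qed.

Lemma bijective_rel_pull (R : hrel B B) (R' : hrel A A) :
  (forall x y, R' x y <-> R (h x) (h y)) -> bijective_rel R -> bijective_rel R'.
Proof.
have [g hK gK] := h_bij; move=> RE [Rl Rr]; split=> [x | y].
  have [y [Rxy uy]] := Rl (h x); exists (g y); split=> [|y' /RE /uy ->].
    by apply/RE; rewrite gK.
  by rewrite hK.
have [x [Rxy ux]] := Rr (h y); exists (g x); split=> [|x' /RE /ux ->].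
  by apply/RE; rewrite gK.
by rewrite hK.
Qed.

Lemma frobenius_laws_pull : frobenius_laws D -> frobenius_laws fdata_pull.
Proof.
case=> uD aD nD; split; [exact: unit_law_pull | exact: assoc_law_pull |].
exact: bijective_rel_pull pairing_pull nD.
Qed.
End Pull.

Definition fdata_iso (A B : Type) (f : A -> B) (D : fdata A) (D' : fdata B) :=
  [/\ forall z, d_eta D' (f z) = d_eta D z, forall z, d_eps D' (f z) = d_eps D z &
      forall x y z, d_mu D' (f x) (f y) (f z) = d_mu D x y z].

Definition isomorphic (A B : Type) (D : fdata A) (D' : fdata B) :=
  exists2 f, bijective f & fdata_iso f D D'.

Lemma fdata_iso_comp (A B C : Type) (f : A -> B) (g : B -> C) D1 D2 D3 :
  fdata_iso f D1 D2 -> fdata_iso g D2 D3 -> fdata_iso (g \o f) D1 D3.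
Proof.
case=> eta_f eps_f mu_f [eta_g eps_g mu_g].
by split=> [z|z|x y z]; rewrite /= ?eta_g ?eps_g ?mu_g.
Qed.

Lemma isomorphic_comp (A B C : Type) (D1 : fdata A) (D2 : fdata B) (D3 : fdata C) :
  isomorphic D1 D2 -> isomorphic D2 D3 -> isomorphic D1 D3.
Proof.
case=> f f_bij iso_f [g g_bij iso_g]; exists (g \o f); first exact: bij_comp.
exact: fdata_iso_comp iso_f iso_g.
Qed.

Lemma isomorphic_pull (A B : Type) (h : A -> B) (D : fdata B) :
  bijective h -> isomorphic (fdata_pull h D) D.
Proof. by exists h. Qed.

Lemma bij_imsetE (T T' : finType) (f : T -> T') (A : {set T}) (B : {set T'}) :
  bijective f -> f @: A = B <-> (forall z, (f z \in B) = (z \in A)).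
Proof.
move=> f_bij; have f_inj := bij_inj f_bij; have [g fK gK] := f_bij.
split=> [<- z | AB]; first by rewrite mem_imset.
by apply/setP=> w; rewrite -[w]gK mem_imset // AB.
Qed.

Lemma frob_isoP (T T' : finType) (F : frob T) (F' : frob T') :
  frob_iso F F' <-> isomorphic (fdata_of F) (fdata_of F').
Proof.
split=> [[f [f_bij /(bij_imsetE _ _ f_bij) eta_f /(bij_imsetE _ _ f_bij) eps_f mu_f]] |
         [f f_bij [eta_f eps_f mu_f]]].
  by exists f => //; split=> // x y z; rewrite /= mu_f mem_imset //; exact: bij_inj.
have imsetE := bij_imsetE _ _ f_bij.
by exists f; split=> [|||x y]; [|apply/imsetE..|apply/esym/imsetE => z; apply: mu_f].
Qed.

(* [all] and [has] evaluate both sides of [&&] / [||] under [vm_compute], which is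
   call-by-value; these variants stop at the first decisive element. *)
Fixpoint all_lazy (T : Type) (p : pred T) (s : seq T) : bool :=
  if s is x :: s' then (if p x then all_lazy p s' else false) else true.

Fixpoint has_lazy (T : Type) (p : pred T) (s : seq T) : bool :=
  if s is x :: s' then (if p x then true else has_lazy p s') else false.

Lemma all_lazyE (T : Type) (p : pred T) s : all_lazy p s = all p s.
Proof. by elim: s => //= x s ->; case: (p x). Qed.

Lemma has_lazyE (T : Type) (p : pred T) s : has_lazy p s = has p s.
Proof. by elim: s => //= x s ->; case: (p x). Qed.

Fixpoint subseqs (T : Type) (s : seq T) : seq (seq T) :=
  if s is x :: s' then subseqs s' ++ map (cons x) (subseqs s') else [:: [::]].

Lemma filter_subseqs (T : eqType) (p : pred T) s : filter p s \in subseqs s.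
Proof.
elim: s => //= x s IH; rewrite mem_cat.
by case: (p x); rewrite ?(map_f (cons x) IH) ?IH ?orbT.
Qed.

Lemma iff_eqP (P Q : Prop) b c : reflect P b -> reflect Q c -> reflect (P <-> Q) (b == c).
Proof. by case=> hP; case=> hQ; constructor; tauto. Qed.

Section Decide.
Variables (T : eqType) (univ : seq T).
Hypothesis univP : forall x, x \in univ.

Lemma all_univP (P : T -> Prop) (p : pred T) :
  (forall x, reflect (P x) (p x)) -> reflect (forall x, P x) (all_lazy p univ).
Proof.
move=> pP; rewrite all_lazyE; apply: (iffP allP) => [H x | H x _]; apply/pP; last exact: H.
exact: H (univP x).
Qed.

Lemma has_univP (P : T -> Prop) (p : pred T) :
  (forall x, reflect (P x) (p x)) -> reflect (exists x, P x) (has_lazy p univ).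
Proof.
move=> pP; rewrite has_lazyE; apply: (iffP hasP) => [[x _ /pP] | [x /pP]]; first by exists x.
by exists x.
Qed.

Lemma has2_univP (p q : pred T) :
  reflect (exists2 x, p x & q x) (has_lazy (fun x => p x && q x) univ).
Proof.
apply: (iffP (has_univP (fun x => andP))) => [[x [px qx]] | [x px qx]]; first by exists x.
by exists x.
Qed.

Lemma unique_univP (P : T -> Prop) (p : pred T) : (forall x, reflect (P x) (p x)) ->
  reflect (exists! x, P x)
    (has_lazy (fun x => p x && all_lazy (fun x' => p x' ==> (x == x')) univ) univ).
Proof.
move=> pP; apply: has_univP => x; apply: andPP (pP x) _.
by apply: all_univP => x'; apply: implyPP (pP x') eqP.
Qed.

Definition unit_lawb (eta : pred T) (mu : T -> T -> pred T) :=
  all_lazy (fun x => all_lazy (fun z =>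
    (has_lazy (fun e => eta e && mu x e z) univ == (x == z)) &&
    (has_lazy (fun e => eta e && mu e x z) univ == (x == z))) univ) univ.

Definition assoc_lawb (mu : T -> T -> pred T) :=
  all_lazy (fun x => all_lazy (fun y => all_lazy (fun z => all_lazy (fun w =>
    has_lazy (fun m => mu y z m && mu x m w) univ ==
    has_lazy (fun m => mu x y m && mu m z w) univ) univ) univ) univ) univ.

Definition pairingb (eps : pred T) (mu : T -> T -> pred T) : rel T :=
  fun x y => has_lazy (fun m => mu x y m && eps m) univ.

Definition bijective_relb (r : rel T) :=
  all_lazy (fun x => has_lazy (fun y =>
    r x y && all_lazy (fun y' => r x y' ==> (y == y')) univ) univ) univ &&
  all_lazy (fun y => has_lazy (fun x =>
    r x y && all_lazy (fun x' => r x' y ==> (x == x')) univ) univ) univ.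

Definition frobenius_lawsb (D : fdata T) :=
  [&& unit_lawb (d_eta D) (d_mu D), assoc_lawb (d_mu D) &
      bijective_relb (pairingb (d_eps D) (d_mu D))].

Lemma unit_lawP D : reflect (unit_law D) (unit_lawb (d_eta D) (d_mu D)).
Proof.
apply: all_univP => x; apply: all_univP => z.
by apply: andPP; apply: iff_eqP (has2_univP _ _) eqP.
Qed.

Lemma assoc_lawP D : reflect (assoc_law D) (assoc_lawb (d_mu D)).
Proof.
do 4 apply: all_univP => ?.
exact: iff_eqP (has2_univP _ _) (has2_univP _ _).
Qed.

Lemma pairingP D x y : reflect (pairing D x y) (pairingb (d_eps D) (d_mu D) x y).
Proof. exact: has2_univP. Qed.

Lemma bijective_relP (R : hrel T T) (r : rel T) :
  (forall x y, reflect (R x y) (r x y)) -> reflect (bijective_rel R) (bijective_relb r).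
Proof.
by move=> rP; apply: andPP; apply: all_univP => ?; apply: unique_univP => ?; apply: rP.
Qed.

Lemma frobenius_lawsP D : reflect (frobenius_laws D) (frobenius_lawsb D).
Proof.
apply: (iffP and3P) => [[/unit_lawP ? /assoc_lawP ? /(bijective_relP (pairingP D)) ?] | [? ? ?]].
  by split.
by split; [apply/unit_lawP | apply/assoc_lawP | apply/(bijective_relP (pairingP D))].
Qed.

Definition fdata_isob (f : T -> T) (D D' : fdata T) :=
  all_lazy (fun z => (d_eta D' (f z) == d_eta D z) && (d_eps D' (f z) == d_eps D z)) univ &&
  all_lazy (fun x => all_lazy (fun y => all_lazy (fun z =>
    d_mu D' (f x) (f y) (f z) == d_mu D x y z) univ) univ) univ.

Lemma fdata_isoP f D D' : reflect (fdata_iso f D D') (fdata_isob f D D').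
Proof.
apply: (iffP andP) => [[etaE muE] | [eta_f eps_f mu_f]].
  move/(all_univP (fun z => andPP eqP eqP)): etaE => etaE.
  move/(all_univP (fun x => all_univP (fun y => all_univP (fun z => eqP)))): muE.
  by split=> [z|z|//]; have [] := etaE z.
split; first by apply/(all_univP (fun z => andPP eqP eqP)).
exact/(all_univP (fun x => all_univP (fun y => all_univP (fun z => eqP)))).
Qed.

Definition reindex (s t : seq T) (x : T) : T := nth x t (index x s).

Lemma reindexK s t : uniq t -> size s = size t -> {in s, cancel (reindex s t) (reindex t s)}.
Proof.
move=> t_uniq st x xs; have lt_x : index x s < size s by rewrite index_mem.
rewrite /reindex index_uniq -?st // (set_nth_default x) ?nth_index //.
Qed.

Hypothesis univ_uniq : uniq univ.

Definition isomorphicb (D D' : fdata T) :=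
  has_lazy (fun t => fdata_isob (reindex univ t) D D') (permutations univ).

Lemma isomorphicP D D' : reflect (isomorphic D D') (isomorphicb D D').
Proof.
rewrite /isomorphicb has_lazyE; apply: (iffP hasP) => [[t] | [f f_bij /fdata_isoP isoD]].
  rewrite mem_permutations => t_univ /fdata_isoP isoD; exists (reindex univ t) => //.
  have t_uniq : uniq t by rewrite (perm_uniq t_univ).
  have st := perm_size t_univ.
  exists (reindex t univ) => x; first exact: reindexK t_uniq (esym st) x (univP x).
  by apply: (reindexK univ_uniq st); rewrite (perm_mem t_univ).
have [g fK gK] := f_bij; exists (map f univ).
  rewrite mem_permutations uniq_perm ?map_inj_uniq //; first exact: bij_inj.
  by move=> x; rewrite -[x]gK map_f ?univP.
suff -> : reindex univ (map f univ) = f by [].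
apply: functional_extensionality => x.
by rewrite /reindex (nth_map x) ?nth_index ?index_mem.
Qed.

Fixpoint all_tables (ok : T -> T -> seq T -> bool) (leaf : (T -> T -> seq T) -> bool)
    (cells : seq (T * T)) (tbl : T -> T -> seq T) : bool :=
  if cells is (x, y) :: cells' then
    all_lazy (fun s => if ok x y s then
      all_tables ok leaf cells' (fun x' y' => if (x' == x) && (y' == y) then s else tbl x' y')
    else true) (subseqs univ)
  else leaf tbl.

Lemma all_tablesP ok leaf cells tbl : all_tables ok leaf cells tbl ->
  forall tbl', (forall x y, (x, y) \notin cells -> tbl' x y = tbl x y) ->
  (forall x y, (x, y) \in cells -> ok x y (tbl' x y)) ->
  (forall x y, tbl' x y \in subseqs univ) -> leaf tbl'.
Proof.
elim: cells tbl => [|[x y] cells IH] tbl /=.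
  move=> leaf_tbl tbl' tblE _ _.
  suff -> : tbl' = tbl by [].
  by apply: functional_extensionality => x; apply: functional_extensionality => y; apply: tblE.
rewrite all_lazyE => /allP search tbl' tblE okE tbl'_sub.
have := search _ (tbl'_sub x y); rewrite okE ?mem_head // => /IH; apply=> [x' y' | x' y' c|//].
  move=> nc; case: ifP => [/andP[/eqP -> /eqP ->] // | /negbT xy].
  by apply: tblE; rewrite in_cons xpair_eqE negb_or xy.
by apply: okE; rewrite in_cons c orbT.
Qed.

Definition unit_cell_ok (eta : pred T) x y (s : seq T) :=
  all_lazy (fun z => (eta y ==> (z == x)) && (eta x ==> (z == y))) s.

Lemma unit_law_cell_ok (D : fdata T) x y :
  unit_law D -> unit_cell_ok (d_eta D) x y (filter (d_mu D x y) univ).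
Proof.
move=> uD; rewrite /unit_cell_ok all_lazyE; apply/allP => z; rewrite mem_filter => /andP[mu_z _].
apply/andP; split; apply/implyP => eta_e; apply/eqP/esym.
  by apply: (uD x z).1.1; exists y.
by apply: (uD y z).2.1; exists x.
Qed.

Variables (cases : nat -> fdata T) (n : nat).

Definition classifiedb (D : fdata T) := has_lazy (fun k => isomorphicb (cases k) D) (iota 0 n).

Definition frobenius_leaf (eta : pred T) (mu : T -> T -> pred T) :=
  if assoc_lawb mu then
    all_lazy (fun eps => if bijective_relb (pairingb (fun z => z \in eps) mu)
      then classifiedb (FData eta (fun z => z \in eps) mu) else true) (subseqs univ)
  else true.

Definition table_mu (tbl : T -> T -> seq T) : T -> T -> pred T := fun x y z => z \in tbl x y.

Definition unit_cells (eta : pred T) :=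
  [seq c <- [seq (x, y) | x <- univ, y <- univ] | eta c.1 || eta c.2].

Definition free_cells (eta : pred T) :=
  [seq c <- [seq (x, y) | x <- univ, y <- univ] | ~~ (eta c.1 || eta c.2)].

Definition classification_search :=
  all_lazy (fun eta => if eta == [::] then true else
    all_tables (unit_cell_ok (fun z => z \in eta)) (fun tbl =>
      if unit_lawb (fun z => z \in eta) (table_mu tbl) then
        all_tables (fun _ _ _ => true)
          (fun tbl' => frobenius_leaf (fun z => z \in eta) (table_mu tbl'))
          (free_cells (fun z => z \in eta)) tbl
      else true) (unit_cells (fun z => z \in eta)) (fun _ _ => [::])) (subseqs univ).

Lemma filter_univE (p : pred T) : (fun z => z \in filter p univ) = p.
Proof. by apply: functional_extensionality => z; rewrite mem_filter univP andbT. Qed.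

Lemma frobenius_leafP D : frobenius_laws D -> frobenius_leaf (d_eta D) (d_mu D) ->
  exists2 k, k < n & isomorphic (cases k) D.
Proof.
case=> _ /assoc_lawP aD /(bijective_relP (pairingP D)) nD.
rewrite /frobenius_leaf aD all_lazyE => /allP/(_ _ (filter_subseqs (d_eps D) univ)).
rewrite filter_univE fdataE nD /classifiedb has_lazyE => /hasP[k].
by rewrite mem_iota => /andP[_ lt_k] /isomorphicP; exists k.
Qed.

Lemma table_mu_filter D : table_mu (fun x y => filter (d_mu D x y) univ) = d_mu D.
Proof.
apply: functional_extensionality => x; apply: functional_extensionality => y.
exact: filter_univE.
Qed.

Lemma free_cells_searchP D tbl : frobenius_laws D ->
  (forall x y, d_eta D x || d_eta D y -> tbl x y = filter (d_mu D x y) univ) ->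
  all_tables (fun _ _ _ => true) (fun tbl' => frobenius_leaf (d_eta D) (table_mu tbl'))
    (free_cells (d_eta D)) tbl ->
  exists2 k, k < n & isomorphic (cases k) D.
Proof.
move=> frobD tblE /all_tablesP/(_ (fun x y => filter (d_mu D x y) univ)).
rewrite table_mu_filter => leafD; apply: frobenius_leafP frobD (leafD _ _ _) => // x y.
  by rewrite mem_filter allpairs_f ?univP // andbT negbK => /tblE.
exact: filter_subseqs.
Qed.

Lemma unit_law_restrict (D : fdata T) (mu : T -> T -> pred T) :
  (forall x e, d_eta D e -> mu x e =1 d_mu D x e /\ mu e x =1 d_mu D e x) ->
  unit_law D -> unit_law (FData (d_eta D) (d_eps D) mu).
Proof.
move=> muE uD x z; have [[l1 l2] [r1 r2]] := uD x z.
split; split=> [[e eta_e] | xz].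
- by rewrite /= (muE x e eta_e).1 => mu_z; apply: l1; exists e.
- by have [e eta_e mu_z] := l2 xz; exists e; rewrite //= (muE x e eta_e).1.
- by rewrite /= (muE x e eta_e).2 => mu_z; apply: r1; exists e.
- by have [e eta_e mu_z] := r2 xz; exists e; rewrite //= (muE x e eta_e).2.
Qed.

(* The search skips [eta = [::]], which the unit law excludes only on an inhabited type. *)
Lemma classification_searchP (x0 : T) : classification_search ->
  forall D : fdata T, frobenius_laws D -> exists2 k, k < n & isomorphic (cases k) D.
Proof.
move=> search D frobD; have [uD _ _] := frobD.
pose eta := filter (d_eta D) univ.
have eta_nil : eta == [::] = false.
  have [e eta_e _] := (uD x0 x0).1.2 erefl.
  have : e \in eta by rewrite mem_filter eta_e univP.
  by case: eta.
move: search; rewrite /classification_search all_lazyE => /allP/(_ eta (filter_subseqs _ _)).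
pose tbl x y := if d_eta D x || d_eta D y then filter (d_mu D x y) univ else [::].
have tblE x y : d_eta D x || d_eta D y -> tbl x y = filter (d_mu D x y) univ.
  by rewrite /tbl => ->.
have tbl_free x y : (x, y) \notin unit_cells (d_eta D) -> tbl x y = [::].
  by rewrite mem_filter allpairs_f ?univP // andbT /tbl => /negbTE ->.
have tbl_ok x y : (x, y) \in unit_cells (d_eta D) -> unit_cell_ok (d_eta D) x y (tbl x y).
  by rewrite mem_filter => /andP[/tblE -> _]; apply: unit_law_cell_ok.
have tbl_sub x y : tbl x y \in subseqs univ.
  rewrite /tbl; case: ifP => _; first exact: filter_subseqs.
  by rewrite -(filter_pred0 univ) filter_subseqs.
rewrite eta_nil filter_univE => /all_tablesP/(_ tbl tbl_free tbl_ok tbl_sub).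
have /unit_lawP -> : unit_law (FData (d_eta D) (d_eps D) (table_mu tbl)).
  apply: unit_law_restrict uD => x e eta_e.
  by rewrite /table_mu !tblE ?eta_e ?orbT //; split=> z; rewrite mem_filter univP andbT.
exact: free_cells_searchP frobD tblE.
Qed.

Definition cases_frobeniusb := all_lazy (fun k => frobenius_lawsb (cases k)) (iota 0 n).

Lemma cases_frobenius : cases_frobeniusb -> forall k, k < n -> frobenius_laws (cases k).
Proof.
rewrite /cases_frobeniusb all_lazyE => /allP frob_cases k lt_k.
by apply/frobenius_lawsP; apply: frob_cases; rewrite mem_iota.
Qed.

Definition cases_nonisomorphicb :=
  all_lazy (fun k => all_lazy (fun l =>
    if isomorphicb (cases k) (cases l) then k == l else true) (iota 0 n)) (iota 0 n).

Lemma cases_nonisomorphic : cases_nonisomorphicb ->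
  forall k l, k < n -> l < n -> isomorphic (cases k) (cases l) -> k = l.
Proof.
rewrite /cases_nonisomorphicb all_lazyE => /allP noniso k l lt_k lt_l /isomorphicP iso_kl.
have := noniso k; rewrite mem_iota leq0n add0n lt_k => /(_ isT).
by rewrite all_lazyE => /allP/(_ l); rewrite mem_iota leq0n add0n lt_l iso_kl => /(_ isT)/eqP.
Qed.

End Decide.

(* ['I_3] with the equality test on [nat_of_ord]: the generic subtype equality of
   ['I_n] is an order of magnitude slower under [vm_compute]. *)
Definition I3 : Type := 'I_3.

Lemma I3_eqP : Equality.axiom (fun x y : I3 => nat_of_ord x == nat_of_ord y).
Proof. by move=> x y; apply: (iffP eqP) => [/val_inj | ->]. Qed.

HB.instance Definition _ := hasDecEq.Build I3 I3_eqP.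

Definition univ3 : seq I3 := [:: ea; eb; ec].

Lemma univ3P (x : I3) : x \in univ3.
Proof. by case: x => [[|[|[|]]] ?]. Qed.

Lemma univ3_uniq : uniq univ3.
Proof. by []. Qed.

(* A computable copy of [fcase]: membership in the (locked) finite sets of [Defs]
   does not reduce under [vm_compute]. *)
Definition mu_u_seq (bb bc cc : seq I3) (x y : I3) : seq I3 :=
  if x == ea then [:: y] else if y == ea then [:: x]
  else if (x == eb) && (y == eb) then bb
  else if (x == ec) && (y == ec) then cc
  else bc.

Definition case_u_data (e bb bc cc : seq I3) : fdata I3 :=
  FData (fun z => z \in [:: ea]) (fun z => z \in e) (fun x y z => z \in mu_u_seq bb bc cc x y).

Definition mu_v_seq (cc : seq I3) (x y : I3) : seq I3 :=
  if (x == ea) && (y == ea) then [:: ea]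
  else if (x == ea) || (y == ea) then [::]
  else if (x == eb) && (y == eb) then [:: eb]
  else if (x == ec) && (y == ec) then cc
  else [:: ec].

Definition case_v_data (e cc : seq I3) : fdata I3 :=
  FData (fun z => z \in [:: ea; eb]) (fun z => z \in e) (fun x y z => z \in mu_v_seq cc x y).

Definition case_w_data : fdata I3 :=
  FData predT predT (fun x y z => z \in if x == y then [:: x] else [::]).

Definition case_data (n : nat) : fdata I3 :=
  match n with
  | 1 => case_u_data [:: ea] [:: ea] [:: ec] [:: ea; eb]
  | 2 => case_u_data [:: ea] [:: ea] [:: ec] [:: ea; eb; ec]
  | 3 => case_u_data [:: ea] [:: ea; eb] [:: ec] [:: ea; eb]
  | 4 => case_u_data [:: ea] [:: ea; eb] [:: ec] [:: ea; eb; ec]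
  | 5 => case_u_data [:: ea] [:: ea; ec] [:: eb; ec] [:: ea; eb]
  | 6 => case_u_data [:: ea] [:: ea; ec] [:: eb; ec] [:: ea; eb; ec]
  | 7 => case_u_data [:: ea] [:: ea; eb; ec] [:: eb; ec] [:: ea; eb; ec]
  | 8 => case_u_data [:: ea] [:: eb] [:: ea; eb; ec] [:: eb; ec]
  | 9 => case_u_data [:: ea] [:: eb] [:: ea; eb; ec] [:: ec]
  | 10 => case_u_data [:: ea] [:: ec] [:: ea] [:: eb]
  | 11 => case_u_data [:: ea] [:: ec] [:: ea; eb] [:: eb; ec]
  | 12 => case_u_data [:: ea] [:: eb; ec] [:: ea; eb; ec] [:: eb; ec]
  | 13 => case_u_data [:: eb] [::] [::] [:: eb]
  | 14 => case_u_data [:: eb] [::] [::] [:: eb; ec]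
  | 15 => case_u_data [:: eb] [:: ea] [:: ec] [:: ea; eb]
  | 16 => case_u_data [:: eb] [:: ea] [:: ec] [:: ea; eb; ec]
  | 17 => case_u_data [:: eb] [:: ec] [:: ea] [:: eb]
  | 18 => case_u_data [:: eb] [:: ec] [:: ea; ec] [:: ea; eb; ec]
  | 19 => case_u_data [:: eb] [:: ea; ec] [:: ea; ec] [:: ea; eb]
  | 20 => case_u_data [:: eb] [:: ea; ec] [:: ea; ec] [:: ea; eb; ec]
  | 21 => case_v_data [:: ea; eb] [:: eb]
  | 22 => case_v_data [:: ea; eb] [:: eb; ec]
  | 23 => case_v_data [:: ea; ec] [:: eb]
  | 24 => case_v_data [:: ea; ec] [::]
  | _ => case_w_data
  end.

Lemma eq_I3 (x y : 'I_3) : (x == y :> I3) = (x == y).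
Proof. by apply/eqP/eqP. Qed.

Lemma case_u_dataE (E BB BC CC : {set 'I_3}) (e bb bc cc : seq I3) :
  E =i e -> BB =i bb -> BC =i bc -> CC =i cc ->
  fdata_of (case_u E BB BC CC) = case_u_data e bb bc cc.
Proof.
move=> eE bbE bcE ccE; congr FData; apply: functional_extensionality => x.
- by rewrite /= !inE.
- exact: eE.
apply: functional_extensionality => y; apply: functional_extensionality => z.
by case: x y => [[|[|[|//]]] ?] [[|[|[|//]]] ?]; rewrite /= ?inE ?eq_I3 ?bbE ?bcE ?ccE.
Qed.

Lemma case_v_dataE (E CC : {set 'I_3}) (e cc : seq I3) : E =i e -> CC =i cc ->
  fdata_of (case_v E CC) = case_v_data e cc.
Proof.
move=> eE ccE; congr FData; apply: functional_extensionality => x.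
- by rewrite /= !inE.
- exact: eE.
apply: functional_extensionality => y; apply: functional_extensionality => z.
by case: x y => [[|[|[|//]]] ?] [[|[|[|//]]] ?]; rewrite /= ?inE ?eq_I3 ?ccE.
Qed.

Lemma case_w_dataE : fdata_of case_w = case_w_data.
Proof.
congr FData; apply: functional_extensionality => x; rewrite /= ?inE //.
apply: functional_extensionality => y; apply: functional_extensionality => z.
by case: x y => [[|[|[|//]]] ?] [[|[|[|//]]] ?]; rewrite /= ?inE ?eq_I3.
Qed.

Lemma fcase_data (k : 'I_25) : fdata_of (fcase k.+1) = case_data k.+1 :> fdata 'I_3.
Proof.
case: k => k lt_k.
do 24 (case: k lt_k => [|k] lt_k;
  first by (apply: case_u_dataE || apply: case_v_dataE); move=> z; rewrite !inE ?orbA).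
exact: case_w_dataE.
Qed.

Lemma case_data_frobenius : cases_frobeniusb univ3 (fun k => case_data k.+1) 25.
Proof. by vm_compute. Qed.

Lemma case_data_nonisomorphic : cases_nonisomorphicb univ3 (fun k => case_data k.+1) 25.
Proof. by vm_compute. Qed.

Lemma case_data_complete : classification_search univ3 (fun k => case_data k.+1) 25.
Proof. by vm_compute. Qed.

Lemma card_ord_bij (T : finType) n : #|T| = n -> exists h : 'I_n -> T, bijective h.
Proof. by move=> <-; exists enum_val; apply: enum_val_bij. Qed.

Theorem theorem6p1 :
  (* each of the 25 listed structures is a Frobenius object in Rel *)
  (forall k : 'I_25, is_frobenius (fcase k.+1)) /\
  (* they are pairwise non-isomorphic *)
  (forall k l : 'I_25, frob_iso (fcase k.+1) (fcase l.+1) -> k = l) /\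
  (* every Frobenius object on a three-element set is isomorphic to one of them *)
  (forall (T : finType) (F : frob T), #|T| = 3 -> is_frobenius F ->
     exists k : 'I_25, frob_iso (fcase k.+1) F).
Proof.
split; [|split].
- move=> k; apply/frobeniusP; rewrite fcase_data.
  exact: (cases_frobenius univ3P case_data_frobenius (ltn_ord k)).
- move=> k l /frob_isoP; rewrite !fcase_data => iso_kl; apply: val_inj.
  have noniso := cases_nonisomorphic univ3P univ3_uniq case_data_nonisomorphic.
  exact: noniso _ _ (ltn_ord k) (ltn_ord l) iso_kl.
- move=> T F /card_ord_bij [h h_bij] /frobeniusP /(frobenius_laws_pull h_bij).
  case/(classification_searchP univ3P univ3_uniq ea case_data_complete) => k lt_k iso_k.
  exists (Ordinal lt_k); apply/frob_isoP; rewrite fcase_data.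
  exact: isomorphic_comp iso_k (isomorphic_pull _ h_bij).
Qed.
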